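(* Let $K$ be a field and let $p(s)=s^n+a_{n-1}s^{n-1}+\dots+a_0\in K[s]$ be a monic irreducible polynomial of degree $n$. Let $b(s)=(1,s,\dots,s^{n-1})^T\in K^n[s]$, let $C=C(p)$ be the companion matrix of $p$ and let $M=M(p)$ be the Hankel matrix defined in the context. Then \[ (sI-C)^{-1}=\pi_-\bigl(p^{-1}\,b\,b^TM\bigr), \] and for every integer $k\ge1$, \[ \bigl(sI-J(p^k)\bigr)^{-1}=\pi_-\Bigl(\bigl(pI_k-N_k\bigr)^{-1}\otimes b\,b^TM\Bigr). \]
   Context: For $f\in K(s)$ (rational functions over $K$) write uniquely $f=w+y$ with $w$ strictly proper (i.e. $w=0$ or $w=g/h$, $\deg g<\deg h$) and $y\in K[s]$; $\pi_-f=w$, applied entrywise to matrices. The companion matrix $C=C(p)$ is the $n\times n$ matrix with ones in positions $(i,i+1)$, $i=1,\dots,n-1$, last row $(-a_0,-a_1,\dots,-a_{n-1})$, and zeros elsewhere. $M=M(p)$ is the $n\times n$ matrix whose $(i,j)$ entry is $a_{i+j-1}$ if $i+j-1\le n-1$, $1$ if $i+j-1=n$, and $0$ if $i+j-1>n$ (first row $(a_1,\dots,a_{n-1},1)$, last row $(1,0,\dots,0)$). $N_k$ is the $k\times k$ matrix with ones on the superdiagonal and zeros elsewhere, and $I_k$ the $k\times k$ identity. $V=e_ne_1^T$ is the $n\times n$ matrix with a single $1$ in position $(n,1)$. The Jacobson block is $J(p^k)=I_k\otimes C+N_k\otimes V$ (an $nk\times nk$ matrix with $C$ in the diagonal blocks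 and $V$ in the blocks just above the diagonal), where $\otimes$ denotes the Kronecker product $A\otimes B=(a_{ij}B)$. *)

From HB Require Import structures.
From mathcomp Require Import all_boot all_order all_algebra.
From mathcomp Require Import generic_quotient fraction mxtens.
Set Implicit Arguments. Unset Strict Implicit. Unset Printing Implicit Defensive.
Import GRing.Theory.
Local Open Scope ring_scope.

Notation "x %:F" := (@FracField.tofrac _ x) : ring_scope.
Notation ratf K := {fraction {poly K}}.

Definition cst (K : fieldType) (a : K) : ratf K := (a%:P)%:F.

(* For f = g/h (any representative, h != 0),
   f = (g %% h)/h + (g %/ h), with (g %% h)/h strictly proper (or 0) and
   g %/ h polynomial; by uniqueness of this decomposition this is pi_- f. *)
Definition piminus (K : fieldType) (f : ratf K) : ratf K :=
  let r := repr f in ((\n_r %% \d_r)%:F) / ((\d_r)%:F).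

Definition companion (K : fieldType) (n : nat) (p : {poly K}) : 'M[K]_n :=
  \matrix_(i, j) (if i.+1 == n then - p`_j else ((j : nat) == i.+1)%:R).

(* Hankel matrix M(p) (0-based i,j; 1-based index i+j-1 becomes i+j+1). *)
Definition hankelM (K : fieldType) (n : nat) (p : {poly K}) : 'M[K]_n :=
  \matrix_(i, j) (if (i + j + 1 <= n.-1)%N then p`_(i + j + 1)
                  else if (i + j + 1 == n)%N then 1 else 0).

Definition nilN (R : pzRingType) (k : nat) : 'M[R]_k :=
  \matrix_(i, j) ((j : nat) == i.+1)%:R.

Definition Vmx (R : pzRingType) (n : nat) : 'M[R]_n :=
  \matrix_(i, j) (((i.+1 == n) && ((j : nat) == 0%N)))%:R.

Definition jacobson (K : fieldType) (n : nat) (p : {poly K}) (k : nat)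
  : 'M[K]_(k * n) :=
  (1%:M : 'M[K]_k) *t companion n p + nilN K k *t Vmx K n.

Definition bvec (K : fieldType) (n : nat) : 'cV[ratf K]_n :=
  \col_i (('X^i : {poly K})%:F).

From HB Require Import structures.
From mathcomp Require Import all_boot all_order all_algebra.
From mathcomp Require Import generic_quotient fraction mxtens ring zify.
Set Implicit Arguments. Unset Strict Implicit. Unset Printing Implicit Defensive.
Import GRing.Theory.
Local Open Scope ring_scope.

(* The entries of b^T M are the Horner tails q_j = p div s^(j+1) (drop_poly),
   which satisfy q_(j-1) = a_j + s q_j.  Reducing s^i q_j modulo p gives a
   polynomial matrix G with G (sI - C) = p I, so (sI - C)^-1 = p^-1 G, and
   p^-1 G is exactly the strictly proper part of p^-1 b b^T M.
   For the Jacobson block, sI - J = I (x) A - N (x) V with A = sI - C and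
   A b = p V b.  The blocks G_j = pi_-(p^-(j+1) b b^T M) therefore satisfy
   A G_0 = I and A G_(j+1) = V G_j (for j > 0 nothing is discarded by pi_-,
   and V only sees the first row, which is always proper), so the inverse is
   sum_j N^j (x) G_j, i.e. pi_- of sum_j N^j (x) p^-(j+1) b b^T M
   = (pI - N)^-1 (x) b b^T M. *)

Section ProperPart.
Variable K : fieldType.

Lemma numden_repr (f : ratf K) : f = (\n_(repr f))%:F / (\d_(repr f))%:F.
Proof.
set r := repr f.
have dF : (\d_r)%:F != 0 by rewrite tofrac_eq0 denom_ratioP.
apply: (mulIf dF); rewrite divfK //.
rewrite -[f in LHS]reprK -/r; unlock FracField.tofrac.
rewrite -[_ * _]FracField.pi_mul; apply/eqmodP.
rewrite /FracField.mulf /= FracField.equivfE.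
by rewrite !numden_Ratio ?mulf_neq0 ?denom_ratioP ?oner_neq0 // !mulr1 mulrC.
Qed.

Lemma eq_tofrac_div (a b c d : {poly K}) : b != 0 -> d != 0 ->
  (a%:F / b%:F = c%:F / d%:F) <-> a * d = c * b.
Proof.
move=> b0 d0; have bF : b%:F != 0 by rewrite tofrac_eq0.
have dF : d%:F != 0 by rewrite tofrac_eq0.
split=> [E|E].
  apply/eqP; rewrite -tofrac_eq !tofracM; apply/eqP.
  by rewrite -[a%:F](divfK bF) E mulrAC (divfK dF).
apply: (mulIf bF); apply: (mulIf dF).
rewrite (divfK bF) mulrAC (divfK dF) -tofracM E.
by rewrite tofracM.
Qed.

(* The difference of the two sides is a multiple of [h1 * h2] of smaller size. *)
Lemma modp_cross_eq (g1 h1 g2 h2 : {poly K}) : h1 != 0 -> h2 != 0 ->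
  g1 * h2 = g2 * h1 -> (g1 %% h1) * h2 = (g2 %% h2) * h1.
Proof.
move=> h10 h20 E; apply/eqP; rewrite -subr_eq0; apply/eqP.
set D := _ - _.
have DE : D = (g2 %/ h2 - g1 %/ h1) * (h1 * h2).
  have modE (g h : {poly K}) : g %% h = g - g %/ h * h.
    by rewrite {2}(divp_eq g h); ring.
  by rewrite /D !modE !mulrBl E; ring.
have sD : (size D < size (h1 * h2)%R)%N.
  have lt_pred (a b c : nat) : (a < b)%N -> (0 < c)%N -> ((a + c).-1 < (b + c).-1)%N.
    by lia.
  rewrite size_mul //; apply: (leq_ltn_trans (size_polyD _ _)).
  rewrite size_polyN gtn_max; apply/andP; split;
    apply: (leq_ltn_trans (size_polyMleq _ _)).
    by apply: lt_pred; rewrite ?ltn_modp ?size_poly_gt0.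
  by rewrite [(size h1 + _)%N]addnC; apply: lt_pred; rewrite ?ltn_modp ?size_poly_gt0.
by rewrite -(modp_small sD) DE modp_mull.
Qed.

Lemma piminus_frac (g h : {poly K}) : h != 0 ->
  piminus (g%:F / h%:F) = (g %% h)%:F / h%:F.
Proof.
move=> h0; rewrite /piminus.
apply/eq_tofrac_div => //; first exact: denom_ratioP.
apply: modp_cross_eq => //; first exact: denom_ratioP.
by apply/eq_tofrac_div => //; [exact: denom_ratioP | rewrite -numden_repr].
Qed.

Lemma piminus_small (g h : {poly K}) : (size g < size h)%N ->
  piminus (g%:F / h%:F) = g%:F / h%:F.
Proof.
move=> sgh; have h0 : h != 0 by rewrite -size_poly_gt0 (leq_ltn_trans _ sgh).
by rewrite piminus_frac // modp_small.
Qed.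

Lemma piminus0 : piminus (0 : ratf K) = 0.
Proof.
have := @piminus_small 0 1; rewrite size_poly0 size_poly1 tofrac0 mul0r.
exact.
Qed.
End ProperPart.

Lemma mulmx1_invmx (R : comUnitRingType) n (A B : 'M[R]_n) :
  A *m B = 1%:M -> invmx A = B.
Proof.
move=> AB; have uA := (mulmx1_unit AB).1.
by rewrite -[RHS](mulKmx uA) AB mulmx1.
Qed.

Lemma invmx_scalar_sub_nilpotent (R : fieldType) m k (c : R) (N : 'M[R]_m) :
  c != 0 -> N ^+ k = 0 ->
  invmx (c *: 1%:M - N) = \sum_(j < k) c ^- j.+1 *: N ^+ j.
Proof.
move=> c0 Nk; apply: mulmx1_invmx.
pose u j := c ^- j *: N ^+ j.
have NS j : N *m N ^+ j = N ^+ j.+1 by rewrite exprS mulmxE.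
have step j : (c *: 1%:M - N) *m (c ^- j.+1 *: N ^+ j) = - (u j.+1 - u j).
  have cE : c * c ^- j.+1 = c ^- j by rewrite exprS invfM mulVKf.
  by rewrite opprB mulmxBl -scalemxAl mul1mx scalerA cE -scalemxAr NS.
rewrite mulmx_sumr (eq_bigr (fun j : 'I_k => - (u j.+1 - u j))) ?sumrN;
  last by move=> j _; exact: step.
rewrite -(big_mkord xpredT (fun j => u j.+1 - u j)) telescope_sumr //.
by rewrite /u Nk scaler0 sub0r opprK expr0 invr1 scale1r.
Qed.

Lemma tensmx11 (R : pzRingType) m n :
  (1%:M : 'M[R]_m) *t (1%:M : 'M[R]_n) = 1%:M.
Proof.
apply/matrixP => x y.
case: (mxtens_indexP x) => a b; case: (mxtens_indexP y) => c d.
rewrite tensmxE !mxE (inj_eq (can_inj (@mxtens_indexK _ _))) xpair_eqE.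
by rewrite -mulnb natrM.
Qed.

Lemma invmx_tens_bidiag (R : comUnitRingType) k m (N : 'M[R]_k)
    (A V : 'M[R]_m) (G : nat -> 'M[R]_m) :
  N ^+ k = 0 -> A *m G 0 = 1%:M -> (forall j, A *m G j.+1 = V *m G j) ->
  invmx (1%:M *t A - N *t V) = \sum_(j < k) N ^+ j *t G j.
Proof.
move=> Nk AG0 AGS; apply: mulmx1_invmx.
pose u j := N ^+ j *t (A *m G j).
have NS j : N *m N ^+ j = N ^+ j.+1 by rewrite exprS mulmxE.
have step j : (1%:M *t A - N *t V) *m (N ^+ j *t G j) = - (u j.+1 - u j).
  by rewrite opprB mulmxBl !tensmx_mul mul1mx /u AGS NS.
rewrite mulmx_sumr (eq_bigr (fun j : 'I_k => - (u j.+1 - u j))) ?sumrN;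
  last by move=> j _; exact: step.
rewrite -(big_mkord xpredT (fun j => u j.+1 - u j)) telescope_sumr //.
by rewrite /u Nk tens0mx sub0r opprK expr0 AG0 tensmx11.
Qed.

Lemma tensmx_suml (R : pzRingType) m n p q k
    (A : 'I_k -> 'M[R]_(m, n)) (B : 'M[R]_(p, q)) :
  (\sum_(j < k) A j) *t B = \sum_(j < k) (A j *t B).
Proof.
apply/matrixP => x y; rewrite mxE !summxE mulr_suml.
by apply: eq_bigr => i _; rewrite mxE.
Qed.

Lemma tensmxZl (R : comPzRingType) m n p q (c : R)
    (A : 'M[R]_(m, n)) (B : 'M[R]_(p, q)) :
  (c *: A) *t B = A *t (c *: B).
Proof. by apply/matrixP => x y; rewrite !mxE -mulrA mulrCA. Qed.

Lemma nilN_expE (R : pzRingType) k j (a c : 'I_k) :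
  (nilN R k ^+ j) a c = ((c : nat) == (a + j)%N)%:R.
Proof.
elim: j c => [|j IH] c; first by rewrite expr0 mxE addn0 eq_sym.
rewrite exprSr -mulmxE mxE.
case: (ltnP (a + j) k) => [ltajk | leka].
  rewrite (bigD1 (Ordinal ltajk)) //= IH eqxx mul1r mxE addnS big1 ?addr0 //.
  move=> l /negPf nla; rewrite IH.
  by rewrite (_ : (l : nat) == (a + j)%N = false) ?mul0r // -nla -val_eqE.
rewrite (_ : (c : nat) == (a + j.+1)%N = false); last first.
  by apply/negbTE; have := ltn_ord c; lia.
rewrite big1 // => l _; rewrite IH (_ : (l : nat) == (a + j)%N = false) ?mul0r //.
by apply/negbTE; have := ltn_ord l; lia.
Qed.

Lemma nilN_nilpotent (R : pzRingType) k : nilN R k ^+ k = 0.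
Proof.
apply/matrixP => a c; rewrite nilN_expE mxE.
rewrite (_ : (c : nat) == (a + k)%N = false) //.
by apply/negbTE; have := ltn_ord c; lia.
Qed.

Lemma sum_nilN_tensE (R : pzRingType) k m (H : nat -> 'M[R]_m) a b c d :
  (\sum_(j < k) nilN R k ^+ j *t H j) (mxtens_index (a, b)) (mxtens_index (c, d))
  = if (a <= c)%N then H (c - a)%N b d else 0.
Proof.
rewrite summxE; under eq_bigr do rewrite tensmxE nilN_expE.
case: leqP => [leac | ltca]; last first.
  rewrite big1 // => j _.
  by rewrite (_ : (c : nat) == (a + j)%N = false) ?mul0r //; lia.
have ltcak : (c - a < k)%N by have := ltn_ord c; lia.
rewrite (bigD1 (Ordinal ltcak)) //= subnKC // eqxx mul1r big1 ?addr0 //.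
move=> j /negPf nja; rewrite (_ : (c : nat) == (a + j)%N = false) ?mul0r //.
apply/negbTE; move/negbT: nja; apply: contra => /eqP cE.
by apply/eqP/val_inj => /=; lia.
Qed.

Lemma map_mx_sum_nilN_tens (R R' : pzRingType) m (H : nat -> 'M[R]_m)
    (f : R -> R') k : f 0 = 0 ->
  map_mx f (\sum_(j < k) nilN R k ^+ j *t H j)
  = \sum_(j < k) nilN R' k ^+ j *t map_mx f (H j).
Proof.
move=> f0; apply/matrixP => x y.
case: (mxtens_indexP x) => a b; case: (mxtens_indexP y) => c d.
rewrite [LHS]mxE sum_nilN_tensE (sum_nilN_tensE (fun j => map_mx f (H j))).
by case: leqP; rewrite ?mxE.
Qed.

Lemma drop_polyS (R : nzRingType) (q : {poly R}) j :
  drop_poly j q = (q`_j)%:P + 'X * drop_poly j.+1 q.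
Proof.
apply/polyP => m; rewrite coefD coefC coefXM !coef_drop_poly.
by case: m => [|m] /=; rewrite ?add0n ?addr0 ?add0r // addSnnS.
Qed.

Lemma Vmx_mulE (R : pzRingType) n m (X : 'M[R]_(n.+1, m)) i j :
  (Vmx R n.+1 *m X) i j = (i == ord_max)%:R * X ord0 j.
Proof.
rewrite mxE (bigD1 ord0) //= big1 ?addr0; first by rewrite mxE eqxx andbT.
by move=> l /negPf l0; rewrite mxE (_ : (l : nat) == 0%N = false) ?andbF ?mul0r.
Qed.

HB.instance Definition _ (K : fieldType) :=
  GRing.RMorphism.copy (@cst K) (@FracField.tofrac _ \o polyC).

Section Companion.
Variables (K : fieldType) (n' : nat) (p : {poly K}).
Hypotheses (p_monic : p \is monic) (p_size : size p = n'.+2).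
Local Notation n := n'.+1.

Lemma drop_poly_deg : drop_poly n p = 1.
Proof.
apply/polyP => m; rewrite coef_drop_poly coef1; case: m => [|m].
  by move/monicP: p_monic; rewrite /lead_coef p_size.
by rewrite nth_default // p_size addSn ltnS leq_addl.
Qed.

Lemma drop_polyE j : drop_poly j.+1 p = \poly_(l < n) p`_(l + j.+1).
Proof.
apply/polyP => m; rewrite coef_drop_poly coef_poly.
by case: ltnP => // lenm; rewrite nth_default // p_size; lia.
Qed.

Lemma hankelM_coef (l j : 'I_n) : hankelM n p l j = p`_(l + j + 1).
Proof.
rewrite mxE; case: ifP => // /negbT; rewrite -ltnNge => ltn.
case: eqP => [-> | /eqP neq]; first by move/monicP: p_monic; rewrite /lead_coef p_size.
by rewrite nth_default // p_size; lia.
Qed.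

Lemma sum_mul_companion (w : nat -> {poly K}) (j : 'I_n) : w 0%N = 0 ->
  \sum_(l < n) w l.+1 * (companion n p l j)%:P = w j - w n * (p`_j)%:P.
Proof.
move=> w0; rewrite big_ord_recr /= mxE eqxx polyCN mulrN; congr (_ - _).
transitivity (\sum_(l < n) w l * ((j : nat) == l)%:R%:P).
  rewrite big_ord_recl /= w0 mul0r add0r; apply: eq_bigr => l _.
  by rewrite mxE eqSS ltn_eqF //= ltn_ord.
rewrite (bigD1 j) //= eqxx mulr1 big1 ?addr0 // => l ljF.
by rewrite (_ : (j : nat) == l = false) ?mulr0 // eq_sym; apply/negbTE.
Qed.

(* A closed form of [('X^i * drop_poly j p) %% p] (see [cofC_modp]) which obeys
   the Horner recursion [cofCS]. *)
Definition cofC (i j : nat) : {poly K} :=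
  'X^i * drop_poly j p - p * drop_poly j 'X^i.

Definition adjC : 'M[{poly K}]_n := \matrix_(i, j) cofC i j.+1.

Lemma cofC0 i : cofC i 0 = 0.
Proof. by rewrite /cofC !drop_poly0l mulrC subrr. Qed.

Lemma cofCS i j :
  'X * cofC i j.+1 - cofC i j = p * (j == i)%:R - 'X^i * (p`_j)%:P.
Proof.
rewrite /cofC (drop_polyS p j) (drop_polyS 'X^i j) coefXn polyC_natr.
ring.
Qed.

Lemma cofC_last i : (i < n)%N -> cofC i n = 'X^i.
Proof.
move=> lt_in; rewrite /cofC drop_poly_deg mulr1.
by rewrite (@drop_poly_eq0 _ _ 'X^i) ?size_polyXn // mulr0 subr0.
Qed.

Lemma size_cofC i j : (i < n)%N -> (size (cofC i j) < size p)%N.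
Proof.
move=> lt_in; case: (ltnP i j) => [lt_ij | le_ji].
  rewrite /cofC (@drop_poly_eq0 _ _ 'X^i) ?size_polyXn // mulr0 subr0.
  apply: (leq_ltn_trans (size_polyMleq _ _)).
  by rewrite size_polyXn size_drop_poly p_size; lia.
have -> : cofC i j = - (take_poly j p * 'X^(i - j)).
  have DX : drop_poly j 'X^i = 'X^(i - j) :> {poly K}.
    by apply/polyP => m; rewrite coef_drop_poly !coefXn; congr (_%:R); lia.
  have Xi : 'X^i = 'X^(i - j) * 'X^j :> {poly K} by rewrite -exprD subnK.
  rewrite /cofC DX Xi; set T := take_poly j p; set D := drop_poly j p.
  by rewrite -[X in X * 'X^(i - j)](poly_take_drop j p) -/T -/D; ring.
rewrite size_polyN; apply: (leq_ltn_trans (size_polyMleq _ _)).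
by have := size_take_poly j p; rewrite size_polyXn p_size; move: (size _) => t; lia.
Qed.

Lemma cofC_modp i j : (i < n)%N -> cofC i j = ('X^i * drop_poly j p) %% p.
Proof.
move=> lt_in; have := modp_addl_mul_small (drop_poly j 'X^i) (size_cofC j lt_in).
move=> <-.
by congr (_ %% _); rewrite /cofC; ring.
Qed.

Lemma adjC_mul : adjC *m char_poly_mx (companion n p) = p%:M.
Proof.
apply/matrixP => i j; rewrite mulmxBr mul_mx_scalar !mxE.
rewrite (eq_bigr (fun l : 'I_n => cofC i l.+1 * (companion n p l j)%:P));
  last by move=> l _; rewrite !mxE.
rewrite sum_mul_companion ?cofC0 // cofC_last //.
by rewrite opprB addrA addrAC cofCS subrK mulr_natr eq_sym.
Qed.

Local Notation s := (('X : {poly K})%:F).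
Local Notation pF := (p%:F).
Local Notation A := (s *: 1%:M - map_mx (@cst K) (companion n p)).
Local Notation V := (Vmx (ratf K) n).
Local Notation bbM :=
  (bvec K n *m (bvec K n)^T *m map_mx (@cst K) (hankelM n p)).

Lemma pF_neq0 : pF != 0.
Proof. by rewrite tofrac_eq0 monic_neq0. Qed.

Lemma map_char_poly_mx :
  map_mx (@FracField.tofrac _) (char_poly_mx (companion n p)) = A.
Proof. by apply/matrixP => i j; rewrite !mxE rmorphB rmorphMn /= mulr_natr. Qed.

Lemma char_companion_adjC :
  A *m (pF^-1 *: map_mx (@FracField.tofrac _) adjC) = 1%:M.
Proof.
apply: mulmx1C; rewrite -map_char_poly_mx -scalemxAl -map_mxM adjC_mul.
by rewrite map_scalar_mx scale_scalar_mx (mulVf pF_neq0).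
Qed.

Lemma invmx_char_companion :
  invmx A = pF^-1 *: map_mx (@FracField.tofrac _) adjC.
Proof. exact: mulmx1_invmx char_companion_adjC. Qed.

Lemma bbME (i j : 'I_n) : bbM i j = ('X^i * drop_poly j.+1 p)%:F.
Proof.
rewrite drop_polyE poly_def mulr_sumr rmorph_sum mxE; apply: eq_bigr => l _.
rewrite [map_mx _ _ _ _]mxE hankelM_coef !mxE big_ord1 !mxE /cst -!tofracM.
congr tofrac.
by rewrite -mul_polyC addn1 -addnS; ring.
Qed.

Lemma piminus_bbM (i j : 'I_n) :
  piminus (pF^-1 * bbM i j) = pF^-1 * (cofC i j.+1)%:F.
Proof.
by rewrite bbME mulrC piminus_frac ?monic_neq0 // -cofC_modp // mulrC.
Qed.

Lemma resolvent_companion : invmx A = map_mx (@piminus K) (pF^-1 *: bbM).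
Proof.
apply/matrixP => i j; rewrite invmx_char_companion [RHS]mxE [X in piminus X]mxE.
by rewrite piminus_bbM !mxE.
Qed.

Lemma bvec_adjC : bvec K n = col ord_max (map_mx (@FracField.tofrac _) adjC).
Proof. by apply/matrixP => i j; rewrite !mxE cofC_last. Qed.

Lemma Vmx_bvec : V *m bvec K n = delta_mx ord_max 0.
Proof.
by apply/matrixP => i j; rewrite Vmx_mulE !mxE expr0 tofrac1 mulr1 [j]ord1 eqxx andbT.
Qed.

Lemma char_companion_bvec : A *m bvec K n = pF *: (V *m bvec K n).
Proof.
rewrite Vmx_bvec bvec_adjC colE -[map_mx _ adjC](scalerKV pF_neq0) -scalemxAl.
by rewrite -scalemxAr mulmxA char_companion_adjC mul1mx.
Qed.

Lemma char_companion_bbM : A *m bbM = pF *: (V *m bbM).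
Proof. by rewrite !mulmxA char_companion_bvec -!scalemxAl. Qed.

Lemma piminus_scaled_bbM j (i l : 'I_n) : (i <= j * n)%N ->
  piminus (pF ^- j.+1 * bbM i l) = pF ^- j.+1 * bbM i l.
Proof.
move=> le_ijn; rewrite bbME mulrC -tofracXn piminus_small //.
have pj0 : p ^+ j.+1 != 0 by rewrite expf_neq0 // monic_neq0.
rewrite -(prednK (_ : 0 < size (p ^+ j.+1))%N) ?size_poly_gt0 // size_exp p_size /=.
apply: (leq_ltn_trans (size_polyMleq _ _)).
rewrite size_polyXn size_drop_poly p_size; nia.
Qed.

Definition Gblock j : 'M[ratf K]_n := map_mx (@piminus K) (pF ^- j.+1 *: bbM).

Lemma Gblock_succ j : Gblock j.+1 = pF ^- j.+2 *: bbM.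
Proof.
apply/matrixP => i l; rewrite mxE [X in piminus X]mxE piminus_scaled_bbM ?mxE //.
by have := ltn_ord i; nia.
Qed.

Lemma Vmx_Gblock j : V *m Gblock j = V *m (pF ^- j.+1 *: bbM).
Proof.
apply/matrixP => i l; rewrite !Vmx_mulE [Gblock _ _ _]mxE [X in piminus X]mxE.
by rewrite piminus_scaled_bbM // [(_ *: bbM) _ _]mxE.
Qed.

Lemma char_Gblock j : A *m Gblock j.+1 = V *m Gblock j.
Proof.
have pE : pF ^- j.+2 * pF = pF ^- j.+1.
  by rewrite [pF ^+ j.+2]exprS invfM mulrAC (mulVf pF_neq0) mul1r.
by rewrite Gblock_succ Vmx_Gblock -!scalemxAr char_companion_bbM scalerA pE.
Qed.

Lemma jacobson_char k : s *: 1%:M - map_mx (@cst K) (jacobson n p k)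
  = 1%:M *t A - nilN (ratf K) k *t V.
Proof.
apply/matrixP => x y.
case: (mxtens_indexP x) => a b; case: (mxtens_indexP y) => c d.
rewrite !mxE !mxtens_indexK (inj_eq (can_inj (@mxtens_indexK _ _))) xpair_eqE.
by rewrite rmorphD !rmorphM !rmorph_nat -mulnb natrM; ring.
Qed.

Lemma resolvent_jacobson k :
  invmx (s *: 1%:M - map_mx (@cst K) (jacobson n p k))
  = map_mx (@piminus K) (invmx (pF *: 1%:M - nilN (ratf K) k) *t bbM).
Proof.
have AG0 : A *m Gblock 0 = 1%:M.
  rewrite /Gblock expr1 -resolvent_companion invmx_char_companion.
  exact: char_companion_adjC.
rewrite jacobson_char (invmx_tens_bidiag (nilN_nilpotent _ k) AG0 char_Gblock).
rewrite (invmx_scalar_sub_nilpotent pF_neq0 (nilN_nilpotent _ _)) tensmx_suml.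
under [in RHS]eq_bigr do rewrite tensmxZl.
by rewrite (map_mx_sum_nilN_tens (fun j => pF ^- j.+1 *: bbM)) ?piminus0.
Qed.

End Companion.

Theorem lemma4p2 (K : fieldType) (n : nat) (p : {poly K})
  (p_monic : p \is monic) (p_irr : irreducible_poly p)
  (p_deg : size p = n.+1) :
  let s : ratf K := ('X : {poly K})%:F in
  let pF : ratf K := p%:F in
  let bbM : 'M[ratf K]_n :=
    bvec K n *m (bvec K n)^T *m map_mx (@cst K) (hankelM n p) in
  invmx (s *: 1%:M - map_mx (@cst K) (companion n p))
    = map_mx (@piminus K) (pF^-1 *: bbM)
  /\
  (forall k : nat, (1 <= k)%N ->
     invmx (s *: 1%:M - map_mx (@cst K) (jacobson n p k))
       = map_mx (@piminus K)
           (invmx (pF *: 1%:M - nilN (ratf K) k) *t bbM)).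
Proof.
(* Irreducibility only serves to exclude n = 0. *)
case: n p_deg => [|n'] p_deg; first by case: p_irr; rewrite p_deg.
split; first exact: resolvent_companion.
by move=> k _; exact: resolvent_jacobson.
Qed.
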